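(* Let $G=(V,E)$ be a network as in the context, $\omega\ge1$ an integer, and $t$ a sink node with $C_t\ge\omega$; let $\delta_t=C_t-\omega$. Then $$|\mathcal{A}_t(\delta_t)|\ge\binom{|\mathrm{In}(t)|}{\delta_t}.$$
   Context: Network: $G=(V,E)$ is a finite directed acyclic graph (parallel edges allowed) with a single source node $s$ and a set of sink nodes $T\subseteq V\setminus\{s\}$; $s$ has no incoming edges and sink nodes have no outgoing edges; $\mathrm{In}(t)$ is the set of incoming edges of $t$. A directed path is a sequence of edges $(e_1,\dots,e_m)$, $m\ge1$, with tail of $e_{k+1}$ equal to head of $e_k$. A cut separating node $v$ from node $u$ is a set of edges whose removal leaves no directed path from $u$ to $v$; $C_t$ is the minimum size of a cut separating sink $t$ from $s$. For $\xi\subseteq E$ and a node $u$, $A\subseteq E$ is a cut separating $u$ from $\xi$ if every directed path in $G$ whose first edge lies in $\xi$ and whose last edge has head $u$ contains an edge of $A$; $\mathrm{mincut}(\xi,u)$ is the minimum size of such a cut. A minimum cut separating $u$ from $\xi$ is primary if it separates $u$ from every minimum cut separating $u$ from $\xi$; it exists and is unique. $\xi$ is primary for $u$ if $\xi$ is the primary minimum cut separating $u$ from $\xi$. $\mathcal{A}_t(r)=\{\xi\subseteq E:|\xi|=r,\ \xi\text{ primary for }t\}$. *)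

From mathcomp Require Import all_boot.
From mathcomp.classical Require Import boolp.
Set Implicit Arguments. Unset Strict Implicit. Unset Printing Implicit Defensive.

(* Network: nodes V, edges E (finite types; parallel edges allowed since edges
   are an abstract type), each edge e has a tail [tl e] and a head [hd e]. *)
Section Network.
Variables (V E : finType) (tl hd : E -> V).

Definition consec (e f : E) : bool := hd e == tl f.

Definition dpath (e : E) (p : seq E) : bool := path consec e p.

Definition acyclic : Prop :=
  forall e p, dpath e p -> hd (last e p) != tl e.

Definition is_network (s : V) (T : {set V}) : Prop :=
  [/\ acyclic,
      forall e, hd e != s,
      forall e, tl e \notin T
    & s \notin T ].

Definition In_edges (t : V) : {set E} := [set e | hd e == t].

Definition cut_nodes (u v : V) (A : {set E}) : Prop :=
  forall e p, dpath e p -> tl e = u -> hd (last e p) = v -> has (mem A) (e :: p).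

Definition cut_edges (xi : {set E}) (u : V) (A : {set E}) : Prop :=
  forall e p, dpath e p -> e \in xi -> hd (last e p) = u -> has (mem A) (e :: p).

Lemma cut_nodes_setT u v : cut_nodes u v [set: E].
Proof. by move=> e p _ _ _; rewrite /= inE. Qed.

Lemma cut_size_ex u v : exists n, `[< exists A, cut_nodes u v A /\ #|A| = n >].
Proof. by exists #|[set: E]|; apply/asboolP; exists [set: E]; split=> //; apply: cut_nodes_setT. Qed.

(* minimum size of a cut separating v from u;  C_t = mincut_nodes s t *)
Definition mincut_nodes (u v : V) : nat := ex_minn (cut_size_ex u v).

Definition is_min_cut (P : {set E} -> Prop) (A : {set E}) : Prop :=
  P A /\ forall B, P B -> #|A| <= #|B|.

Definition primary_for (xi : {set E}) (u : V) : Prop :=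
  is_min_cut (cut_edges xi u) xi /\
  forall B, is_min_cut (cut_edges xi u) B -> cut_edges B u xi.

Definition calA (t : V) (r : nat) : {set {set E}} :=
  [set xi : {set E} | (#|xi| == r) && `[< primary_for xi t >] ].

End Network.

From mathcomp Require Import all_boot.
From mathcomp.classical Require Import boolp.

Set Implicit Arguments.
Unset Strict Implicit.
Unset Printing Implicit Defensive.

(* Every set xi of incoming edges of t is primary for t: each edge of xi is by
   itself a path from xi to t, so every cut separating t from xi contains xi,
   and xi is the unique minimum such cut.  Counting the r-subsets of In(t)
   bounds #|A_t(r)| for every r. *)

Section IncomingEdges.
Variables (V E : finType) (tl hd : E -> V).

Lemma cut_edges_refl (xi : {set E}) (u : V) : cut_edges tl hd xi u xi.
Proof. by move=> e p _ e_xi _; rewrite /= e_xi. Qed.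

Lemma cut_edges_In_subset (t : V) (xi B : {set E}) :
  xi \subset In_edges hd t -> cut_edges tl hd xi t B -> xi \subset B.
Proof.
move=> xi_In cutB; apply/subsetP=> e e_xi.
have /[!inE] /eqP hd_e := subsetP xi_In e e_xi.
by have /= := cutB e [::] (erefl _) e_xi hd_e; rewrite orbF.
Qed.

Lemma In_subset_min_cut (t : V) (xi : {set E}) :
  xi \subset In_edges hd t -> is_min_cut (cut_edges tl hd xi t) xi.
Proof.
move=> xi_In; split=> [|B cutB]; first exact: cut_edges_refl.
exact: subset_leq_card (cut_edges_In_subset xi_In cutB).
Qed.

Lemma In_subset_primary (t : V) (xi : {set E}) :
  xi \subset In_edges hd t -> primary_for tl hd xi t.
Proof.
move=> xi_In; split=> [|B [cutB minB]]; first exact: In_subset_min_cut.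
suff -> : B = xi by apply: cut_edges_refl.
apply/esym/eqP; rewrite eqEcard (cut_edges_In_subset xi_In cutB) /=.
exact/minB/cut_edges_refl.
Qed.

Lemma binomial_In_leq_card_calA (t : V) (r : nat) :
  'C(#|In_edges hd t|, r) <= #|calA tl hd t r|.
Proof.
rewrite -cards_draws; apply/subset_leq_card/subsetP=> xi.
rewrite !inE => /andP[xi_In ->] /=.
exact/asboolP/In_subset_primary.
Qed.

End IncomingEdges.

Theorem corollary17 (V E : finType) (tl hd : E -> V) (s : V) (T : {set V})
    (omega : nat) (t : V) :
  is_network tl hd s T ->
  t \in T ->
  1 <= omega ->
  omega <= mincut_nodes tl hd s t ->
  'C(#|In_edges hd t|, mincut_nodes tl hd s t - omega)
    <= #|calA tl hd t (mincut_nodes tl hd s t - omega)|.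
Proof. by move=> _ _ _ _; apply: binomial_In_leq_card_calA. Qed.
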